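(* Let $k\ge 2$ be an integer. Then $S_{3,2}(k;k)=k^2-k-1$.
   Context: Let $k,r$ be positive integers with $r\mid k$. A solution to $\mathcal{E}$ is a $k$-tuple $(x_1,\dots,x_k)$ of positive integers (not necessarily distinct) with $\sum_{i=1}^{k-1}x_i=x_k$; it lies in $[1,n]$ if all $x_i\in\{1,\dots,n\}$. Given a coloring $\chi$ of $[1,n]$ with colors in $\{0,1\}$ (viewed as integers), a solution is $r$-zero-sum if $\sum_{i=1}^k\chi(x_i)\equiv 0\pmod r$. $S_{3,2}(k;r)$ denotes the least positive integer $n$ such that every coloring $\chi:[1,n]\to\{0,1\}$ admits an $r$-zero-sum solution to $\mathcal{E}$ in $[1,n]$. *)

From mathcomp Require Import all_boot.
Set Implicit Arguments. Unset Strict Implicit. Unset Printing Implicit Defensive.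

(* Colors are chi : nat -> bool (values
   outside [1,n] are irrelevant), viewed as 0/1 integers. *)
Definition solution_in (k n : nat) (x : 'I_k -> nat) : Prop :=
  (forall i, 1 <= x i <= n) /\
  \sum_(i < k | (i : nat) < k.-1) x i = \sum_(i < k | (i : nat) == k.-1) x i.

Definition zero_sum (r k : nat) (chi : nat -> bool) (x : 'I_k -> nat) : Prop :=
  r %| \sum_(i < k) nat_of_bool (chi (x i)).

Definition good (k r n : nat) : Prop :=
  forall chi : nat -> bool,
    exists x : 'I_k -> nat, solution_in n x /\ zero_sum r chi x.

Definition is_S32 (k r n : nat) : Prop :=
  0 < n /\ good k r n /\ forall m, 0 < m -> m < n -> ~ good k r m.

(* Since every colour is 0 or 1, a sum of k colours is divisible by k only when
   the k colours agree, so k-zero-sum solutions are exactly the monochromatic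
   ones and S_{3,2}(k;k) is the 2-colour Rado number of
   x_1 + ... + x_{k-1} = x_k.  Write k = n + 2, so k^2 - k - 1 = (n+1)^2 + n.
   Upper bound: chasing the colours of 1, n+1, n+2, (n+1)^2 and (n+1)^2 + n
   through five explicit solutions of the shape a + n c = L forces a
   monochromatic one.  Lower bound: colour [n+1, (n+1)^2 - 1] apart from the
   rest; a solution inside that block has its sum at least (n+1)^2, and a
   solution outside it either has all summands at most n (so its sum lies in
   [n+1, n(n+1)], inside the block) or a summand at least (n+1)^2 (so its sum
   is at least (n+1)^2 + n). *)
From mathcomp Require Import all_boot zify.

Definition monochromatic {k : nat} (chi : nat -> bool) (x : 'I_k -> nat) : Prop :=
  exists b, forall i, chi (x i) = b.

Lemma zero_sum_monochromatic k chi (x : 'I_k -> nat) :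
  zero_sum k chi x <-> monochromatic chi x.
Proof.
rewrite /zero_sum; split; last first.
  move=> [b Hb]; rewrite (eq_bigr (fun=> nat_of_bool b)) => [|i _]; last by rewrite Hb.
  by rewrite sum_nat_const card_ord dvdn_mulr.
set s := \sum_(i < k) _ => dvd_s.
have s_le_k : s <= k.
  rewrite -[k in _ <= k]card_ord -sum1_card.
  by apply: leq_sum => i _; case: (chi _).
have [s0|s_gt0] := posnP s.
  exists false => i; move: s0; rewrite /s (bigD1 i) //=.
  by case: (chi (x i)).
have s_eq_k : s = k by apply/eqP; rewrite eqn_leq s_le_k dvdn_leq.
exists true => i; apply/negPn/negP => /negbTE chi_i.
have rest_le : \sum_(j < k | j != i) nat_of_bool (chi (x j)) <= k.-1.
  apply: leq_trans (_ : \sum_(j < k | j != i) 1 <= _).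
    by apply: leq_sum => j _; case: (chi _).
  by rewrite sum1_card cardC1 card_ord.
have k_gt0 : 0 < k := leq_ltn_trans (leq0n i) (ltn_ord i).
move: s_eq_k rest_le; rewrite /s (bigD1 i) //= chi_i add0n => ->; lia.
Qed.

Lemma solution_inE n N (x : 'I_n.+2 -> nat) :
  solution_in N x <->
  (forall i, 1 <= x i <= N) /\
  \sum_(i < n.+1) x (widen_ord (leqnSn _) i) = x ord_max.
Proof.
rewrite /solution_in /=.
have -> : \sum_(i < n.+2 | (i : nat) < n.+1) x i =
          \sum_(i < n.+1) x (widen_ord (leqnSn _) i).
  rewrite big_mkcond big_ord_recr /= ltnn addn0.
  by apply: eq_bigr => i _; rewrite /= ltn_ord.
have -> : \sum_(i < n.+2 | (i : nat) == n.+1) x i = x ord_max.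
  rewrite big_mkcond big_ord_recr /= eqxx big1 // => i _.
  by rewrite /= ltn_eqF.
by [].
Qed.

Lemma leq_elem_sum_pos {m} (F : 'I_m -> nat) (j : 'I_m) :
  (forall i, 0 < F i) -> F j + m.-1 <= \sum_(i < m) F i.
Proof.
move=> F_pos; rewrite (bigD1 j) //= leq_add2l.
apply: leq_trans (_ : \sum_(i < m | i != j) 1 <= _).
  by rewrite sum1_card cardC1 card_ord.
by apply: leq_sum => i _; exact: F_pos.
Qed.

Definition affine_tuple (n a c L : nat) : 'I_n.+2 -> nat :=
  fun i => if (i : nat) == n.+1 then L else if (i : nat) == 0 then a else c.

Lemma affine_tuple_witness n N chi a c L :
  0 < a -> 0 < c -> a + n * c = L -> L <= N ->
  chi a = chi L -> chi c = chi L ->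
  exists x : 'I_n.+2 -> nat, solution_in N x /\ zero_sum n.+2 chi x.
Proof.
move=> a_gt0 c_gt0 eL LN chi_a chi_c; exists (affine_tuple n a c L); split.
  apply/solution_inE; split.
    move=> i; rewrite /affine_tuple.
    case: ifP => [_|/negbT i_neq]; first lia.
    case: ifP => [_|/negbT i0]; first lia.
    have n_gt0 : 0 < n by have := ltn_ord i; lia.
    have := leq_pmull c n_gt0; lia.
  rewrite /affine_tuple /= eqxx big_ord_recl /=.
  rewrite (eq_bigr (fun=> c)) => [|i _]; last by rewrite /= /bump /= add1n eqSS ltn_eqF.
  by rewrite sum_nat_const card_ord.
apply/(zero_sum_monochromatic _ _ _); exists (chi L) => i; rewrite /affine_tuple.
by case: ifP => // _; case: ifP.
Qed.

Lemma bool_eq_or_neg (b p : bool) : b = p \/ b = ~~ p.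
Proof. by case: b; case: p; auto. Qed.

Lemma good_upper n : good n.+2 n.+2 (n.+1 ^ 2 + n).
Proof.
move=> chi; set N := _ + n; set p := chi 1.
have [e1|e1] := bool_eq_or_neg (chi n.+1) p.
  by apply: (@affine_tuple_witness _ _ _ 1 1 n.+1); rewrite ?e1 //; lia.
have [e2|e2] := bool_eq_or_neg (chi (n.+1 ^ 2)) (~~ p).
  by apply: (@affine_tuple_witness _ _ _ n.+1 n.+1 (n.+1 ^ 2)); rewrite ?e1 ?e2 //; lia.
rewrite negbK in e2.
have [e3|e3] := bool_eq_or_neg (chi n.+2) p.
  by apply: (@affine_tuple_witness _ _ _ 1 n.+2 (n.+1 ^ 2)); rewrite ?e2 ?e3 //; lia.
have [e4|e4] := bool_eq_or_neg (chi N) (~~ p).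
  by apply: (@affine_tuple_witness _ _ _ n.+1 n.+2 N); rewrite ?e1 ?e3 ?e4 //; lia.
rewrite negbK in e4.
by apply: (@affine_tuple_witness _ _ _ (n.+1 ^ 2) 1 N); rewrite ?e2 ?e4 //; lia.
Qed.

Definition block_coloring (n v : nat) : bool := (n.+1 <= v) && (v < n.+1 ^ 2).

Lemma block_coloring_not_monochromatic n (y : 'I_n.+1 -> nat) L b :
  (forall i, 0 < y i) -> \sum_(i < n.+1) y i = L -> L < n.+1 ^ 2 + n ->
  (forall i, block_coloring n (y i) = b) -> block_coloring n L = b -> False.
Proof.
rewrite /block_coloring => y_pos sumL L_lt y_col L_col.
case: b y_col L_col => y_col L_col.
  have : \sum_(i < n.+1) n.+1 <= L.
    by rewrite -sumL; apply: leq_sum => i _; have := y_col i; lia.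
  rewrite sum_nat_const card_ord; lia.
have L_gt_n : n < L.
  by have := leq_elem_sum_pos y ord0 y_pos; have := y_pos ord0; rewrite sumL; lia.
have [j /= y_big | y_small] := pickP (fun j => n.+1 ^ 2 <= y j).
  have := leq_elem_sum_pos y j y_pos; rewrite sumL; lia.
have : L <= \sum_(i < n.+1) n.
  rewrite -sumL; apply: leq_sum => i _; have := y_col i; have := y_small i; lia.
rewrite sum_nat_const card_ord; lia.
Qed.

Lemma not_good_below n m : m < n.+1 ^ 2 + n -> ~ good n.+2 n.+2 m.
Proof.
move=> m_lt /(_ (block_coloring n)).
move=> [x [/solution_inE [x_range sumL] /zero_sum_monochromatic [b x_col]]].
apply: (@block_coloring_not_monochromatic n
          (fun i => x (widen_ord (leqnSn _) i)) (x ord_max) b) => //.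
- by move=> i; case/andP: (x_range (widen_ord (leqnSn _) i)).
- by case/andP: (x_range ord_max) => _; lia.
Qed.

Theorem mainTheorem6 (k : nat) (hk : 2 <= k) : is_S32 k k (k ^ 2 - k - 1).
Proof.
case: k hk => [|[|n]] // _.
have -> : n.+2 ^ 2 - n.+2 - 1 = n.+1 ^ 2 + n by lia.
split; first lia.
split; first exact: good_upper.
by move=> m _ m_lt; apply: not_good_below.
Qed.
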